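(* Let $q_0>0$, $\alpha\in\mathbb{R}$, $\theta_+\in(0,\pi)\setminus\{\pi/2\}$, and set $\xi(x,t)=q_0x\sin\theta_++\tfrac12\alpha t\tan\theta_+$. Then $q(x,t)=q_0e^{i\alpha t}\cos\!\big(\theta_+-i\xi(x,t)\big)\,\mathrm{sech}\,\xi(x,t)=q_0e^{i\alpha t}\big(\cos\theta_++i\sin\theta_+\tanh\xi\big)$ and $s(x,t)=\tfrac12 q_0\alpha\sin\theta_+\tan\theta_+\,\mathrm{sech}^2\xi(x,t)$ are smooth (nonsingular) on $\mathbb{R}^2$ and satisfy the nonlocal Sinh-Gordon system $q_{xt}(x,t)+2s(x,t)q(x,t)=0$, $s_x(x,t)=-\partial_t\big(q(x,t)q(-x,-t)\big)$, with $s(-x,-t)=s(x,t)$, $s(x,t)\to0$ as $|x|\to\infty$, and $q(x,t)\to q_0e^{i(\alpha t\pm\theta_+)}$ as $x\to\pm\infty$. *)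

(* classical reals. Complex-valued functions are represented
   by their real and imaginary parts (no complex library in Stdlib). *)
From Stdlib Require Import Reals.
Open Scope R_scope.

Definition xi (q0 al th x t : R) : R := q0 * x * sin th + / 2 * al * t * tan th.

(* q(x,t) = q0 e^{i al t} (cos th + i sin th tanh xi) *)
Definition q_re (q0 al th x t : R) : R :=
  q0 * (cos (al * t) * cos th - sin (al * t) * (sin th * tanh (xi q0 al th x t))).
Definition q_im (q0 al th x t : R) : R :=
  q0 * (sin (al * t) * cos th + cos (al * t) * (sin th * tanh (xi q0 al th x t))).

Definition s_fun (q0 al th x t : R) : R :=
  / 2 * q0 * al * sin th * tan th * (/ cosh (xi q0 al th x t)) ^ 2.

Definition pq_re (q0 al th x t : R) : R :=
  q_re q0 al th x t * q_re q0 al th (- x) (- t) - q_im q0 al th x t * q_im q0 al th (- x) (- t).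
Definition pq_im (q0 al th x t : R) : R :=
  q_re q0 al th x t * q_im q0 al th (- x) (- t) + q_im q0 al th x t * q_re q0 al th (- x) (- t).

Definition cont2 (f : R -> R -> R) : Prop :=
  forall x t eps, 0 < eps -> exists delta, 0 < delta /\
    forall x' t', Rabs (x' - x) < delta -> Rabs (t' - t) < delta ->
      Rabs (f x' t' - f x t) < eps.

Fixpoint Cn2 (n : nat) (f : R -> R -> R) : Prop :=
  match n with
  | O => cont2 f
  | S m => cont2 f /\ exists fx ft : R -> R -> R,
      (forall x t, derivable_pt_lim (fun y => f y t) x (fx x t)) /\
      (forall x t, derivable_pt_lim (fun u => f x u) t (ft x t)) /\
      Cn2 m fx /\ Cn2 m ft
  end.

Definition smooth2 (f : R -> R -> R) : Prop := forall n, Cn2 n f.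

Definition lim_pinf (g : R -> R) (l : R) : Prop :=
  forall eps, 0 < eps -> exists M, forall x, M < x -> Rabs (g x - l) < eps.
Definition lim_minf (g : R -> R) (l : R) : Prop :=
  forall eps, 0 < eps -> exists M, forall x, x < M -> Rabs (g x - l) < eps.

(* Put T := tanh ξ, where ξ = c x + b t with c = q0 sin θ and b = (α/2) tan θ.
   Since tanh' = 1 - tanh^2, the functions q, s and q(x,t) q(-x,-t), together
   with all their partial derivatives, are polynomials in cos αt, sin αt and T,
   hence bounded; a function with bounded partial derivatives is jointly
   continuous, so all of them are smooth.  As T is odd in (x,t), q(-x,-t) is the
   complex conjugate of q(x,t), so q(x,t) q(-x,-t) = q0^2 (cos^2 θ + sin^2 θ T^2)
   is real.  The two equations are then polynomial identities in cos αt, sin αt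
   and T, using tan θ cos θ = sin θ.  Finally T -> ±1 as x -> ±∞ because c > 0. *)
From Stdlib Require Import Reals Lra FunctionalExtensionality.
Open Scope R_scope.

Lemma derivable_pt_lim_ext (f g : R -> R) x l l' :
  (forall y, f y = g y) -> l = l' -> derivable_pt_lim g x l' -> derivable_pt_lim f x l.
Proof.
  intros Hfg -> Hg. replace f with g; [exact Hg|].
  apply functional_extensionality; intro y. now rewrite Hfg.
Qed.

Lemma derivable_pt_lim_comp_affine (g g' : R -> R) k m x :
  (forall z, derivable_pt_lim g z (g' z)) ->
  derivable_pt_lim (fun y => g (k * y + m)) x (k * g' (k * x + m)).
Proof.
  intros Hg. rewrite Rmult_comm.
  apply (derivable_pt_lim_comp (fun y => k * y + m) g); [|apply Hg].
  apply derivable_pt_lim_ext with (g := (mult_real_fct k id + fct_cte m)%F)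
    (l' := k * 1 + 0); [reflexivity | ring |].
  apply derivable_pt_lim_plus.
  - apply derivable_pt_lim_scal, derivable_pt_lim_id.
  - apply derivable_pt_lim_const.
Qed.

Lemma Rabs_sub_le_of_derivable_bound (g g' : R -> R) M a b :
  (forall c, derivable_pt_lim g c (g' c)) -> (forall c, Rabs (g' c) <= M) ->
  Rabs (g b - g a) <= M * Rabs (b - a).
Proof.
  intros Hg HM. destruct (MVT_abs g g' a b) as [c [-> _]]; [intros; apply Hg|].
  apply Rmult_le_compat_r; [apply Rabs_pos | apply HM].
Qed.

Lemma Rabs_mult_le_l (u w K : R) : Rabs u <= K -> Rabs (u * w) <= K * Rabs w.
Proof. intros Hu. rewrite Rabs_mult. apply Rmult_le_compat_r; [apply Rabs_pos | exact Hu]. Qed.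

Lemma Rabs_scaled_mult_le k u v :
  0 <= k -> Rabs u <= 1 -> Rabs v <= 1 -> Rabs (k * (u * v)) <= k.
Proof.
  intros Hk Hu Hv. rewrite !Rabs_mult, (Rabs_pos_eq k) by exact Hk.
  assert (Huv : Rabs u * Rabs v <= 1 * 1) by (apply Rmult_le_compat; auto using Rabs_pos).
  nra.
Qed.

Lemma cos_neq_0_of_neq_PI2 th : 0 < th < PI -> th <> PI / 2 -> cos th <> 0.
Proof.
  intros Hth Hth2. destruct (Rtotal_order th (PI / 2)) as [H|[H|H]].
  - apply Rgt_not_eq, cos_gt_0; lra.
  - contradiction.
  - apply Rlt_not_eq, cos_lt_0; lra.
Qed.

Lemma cosh_pos x : 0 < cosh x.
Proof. unfold cosh. pose proof (exp_pos x). pose proof (exp_pos (- x)). lra. Qed.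

Lemma tanh_opp x : tanh (- x) = - tanh x.
Proof.
  unfold tanh, sinh, cosh. rewrite Ropp_involutive.
  pose proof (exp_pos x). pose proof (exp_pos (- x)). field. lra.
Qed.

Lemma sech_sq x : (/ cosh x) ^ 2 = 1 - tanh x ^ 2.
Proof.
  unfold tanh, sinh, cosh. rewrite exp_Ropp. pose proof (exp_pos x).
  field. split; [lra | nra].
Qed.

Lemma one_sub_tanh x : 1 - tanh x = 2 / (exp x ^ 2 + 1).
Proof.
  unfold tanh, sinh, cosh. rewrite exp_Ropp. pose proof (exp_pos x).
  field. split; [nra | lra].
Qed.

Lemma tanh_bounds x : -1 < tanh x < 1.
Proof.
  assert (H : tanh x = 1 - 2 / (exp x ^ 2 + 1)) by (rewrite <- one_sub_tanh; ring).
  pose proof (exp_pos x) as He.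
  assert (Hw : 0 < / (exp x ^ 2 + 1)) by (apply Rinv_0_lt_compat; nra).
  assert (Hw1 : exp x ^ 2 * / (exp x ^ 2 + 1) + / (exp x ^ 2 + 1) = 1) by (field; nra).
  unfold Rdiv in H. nra.
Qed.

Lemma derivable_pt_lim_tanh x : derivable_pt_lim tanh x (1 - tanh x ^ 2).
Proof.
  apply derivable_pt_lim_ext with (g := (sinh / cosh)%F)
    (l' := (cosh x * cosh x - sinh x * sinh x) / (cosh x)²); [reflexivity| |].
  - rewrite <- sech_sq. unfold Rsqr, cosh, sinh. rewrite exp_Ropp.
    pose proof (exp_pos x). field. repeat split; lra || nra.
  - apply derivable_pt_lim_div; [apply derivable_pt_lim_sinh | apply derivable_pt_lim_cosh |].
    apply Rgt_not_eq, cosh_pos.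
Qed.

Lemma cont2_of_bounded_partials (f fx ft : R -> R -> R) M N :
  (forall x t, derivable_pt_lim (fun y => f y t) x (fx x t)) ->
  (forall x t, derivable_pt_lim (fun u => f x u) t (ft x t)) ->
  (forall x t, Rabs (fx x t) <= M) -> (forall x t, Rabs (ft x t) <= N) ->
  cont2 f.
Proof.
  intros Hx Ht HM HN x t eps Heps.
  assert (M0 : 0 <= M) by (eapply Rle_trans; [apply Rabs_pos | apply (HM 0 0)]).
  assert (N0 : 0 <= N) by (eapply Rle_trans; [apply Rabs_pos | apply (HN 0 0)]).
  set (d := eps / (M + N + 1)).
  assert (Hd : (M + N + 1) * d = eps) by (unfold d; field; lra).
  assert (d0 : 0 < d) by (unfold d; apply Rdiv_lt_0_compat; lra).
  exists d. split; [exact d0|]. intros x' t' Hx' Ht'.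
  pose proof (Rabs_sub_le_of_derivable_bound (fun y => f y t') (fun y => fx y t') M x x'
    (fun y => Hx y t') (fun y => HM y t')) as Lx.
  pose proof (Rabs_sub_le_of_derivable_bound (fun u => f x u) (fun u => ft x u) N t t'
    (fun u => Ht x u) (fun u => HN x u)) as Lt.
  replace (f x' t' - f x t) with ((f x' t' - f x t') + (f x t' - f x t)) by ring.
  eapply Rle_lt_trans; [apply Rabs_triang|].
  cbn beta in Lx, Lt. pose proof (Rabs_pos (x' - x)). pose proof (Rabs_pos (t' - t)). nra.
Qed.

Lemma smooth2_of_closed_class (P : (R -> R -> R) -> Prop) :
  (forall f, P f -> exists M, forall x t, Rabs (f x t) <= M) ->
  (forall f, P f -> exists fx ft : R -> R -> R,
     (forall x t, derivable_pt_lim (fun y => f y t) x (fx x t)) /\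
     (forall x t, derivable_pt_lim (fun u => f x u) t (ft x t)) /\ P fx /\ P ft) ->
  forall f, P f -> smooth2 f.
Proof.
  intros Hbound Hderiv.
  assert (Hcont : forall f, P f -> cont2 f).
  { intros f Pf. destruct (Hderiv f Pf) as (fx & ft & Hx & Ht & Pfx & Pft).
    destruct (Hbound fx Pfx) as [M HM]. destruct (Hbound ft Pft) as [N HN].
    exact (cont2_of_bounded_partials f fx ft M N Hx Ht HM HN). }
  intros f Pf n. revert f Pf.
  induction n as [|n IH]; intros f Pf; simpl; [now apply Hcont|].
  split; [now apply Hcont|].
  destruct (Hderiv f Pf) as (fx & ft & Hx & Ht & Pfx & Pft).
  exists fx, ft. auto.
Qed.

Lemma lim_pinf_le_mult (g h : R -> R) L l K :
  (forall x, Rabs (g x - L) <= K * Rabs (h x - l)) -> lim_pinf h l -> lim_pinf g L.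
Proof.
  intros Hgh Hh eps Heps. pose proof (Rabs_pos K) as K0.
  destruct (Hh (eps / (Rabs K + 1))) as [M HM]; [apply Rdiv_lt_0_compat; lra|].
  exists M. intros x Hx. specialize (HM x Hx). specialize (Hgh x).
  assert (Hd : (Rabs K + 1) * (eps / (Rabs K + 1)) = eps) by (field; lra).
  pose proof (Rle_abs K). pose proof (Rabs_pos (h x - l)). nra.
Qed.

Lemma lim_minf_iff_pinf_opp (g : R -> R) l :
  lim_minf g l <-> lim_pinf (fun x => g (- x)) l.
Proof.
  split; intros Hg eps Heps; destruct (Hg eps Heps) as [M HM]; exists (- M); intros x Hx.
  - apply HM. lra.
  - rewrite <- (Ropp_involutive x). apply HM. lra.
Qed.

Lemma lim_minf_le_mult (g h : R -> R) L l K :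
  (forall x, Rabs (g x - L) <= K * Rabs (h x - l)) -> lim_minf h l -> lim_minf g L.
Proof.
  rewrite !lim_minf_iff_pinf_opp. intros Hgh.
  apply lim_pinf_le_mult with (K := K). intro x. apply Hgh.
Qed.

Lemma lim_pinf_comp_affine (f g : R -> R) l k m :
  0 < k -> (forall x, f x = g (k * x + m)) -> lim_pinf g l -> lim_pinf f l.
Proof.
  intros Hk Hfg Hg eps Heps. destruct (Hg eps Heps) as [M HM].
  exists ((M - m) / k). intros x Hx. rewrite Hfg. apply HM.
  apply (Rmult_lt_compat_l k) in Hx; [|exact Hk].
  replace (k * ((M - m) / k)) with (M - m) in Hx by (field; lra). lra.
Qed.

Lemma lim_minf_comp_affine (f g : R -> R) l k m :
  0 < k -> (forall x, f x = g (k * x + m)) -> lim_minf g l -> lim_minf f l.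
Proof.
  rewrite !lim_minf_iff_pinf_opp. intros Hk Hfg.
  apply lim_pinf_comp_affine with (k := k) (m := - m); [exact Hk|].
  intro x. rewrite Hfg. f_equal. ring.
Qed.

Lemma tanh_lim_pinf : lim_pinf tanh 1.
Proof.
  intros eps Heps. exists (2 / eps). intros z Hz.
  assert (H2 : 0 < 2 / eps) by (apply Rdiv_lt_0_compat; lra).
  assert (Heps2 : eps * (2 / eps) = 2) by (field; lra).
  pose proof (exp_ineq1 z ltac:(lra)) as Hexp.
  rewrite <- Rabs_Ropp, Rabs_pos_eq; [|pose proof (tanh_bounds z); lra].
  replace (- (tanh z - 1)) with (1 - tanh z) by ring. rewrite one_sub_tanh.
  apply (Rmult_lt_reg_r (exp z ^ 2 + 1)); [nra|].
  unfold Rdiv. rewrite Rmult_assoc, Rinv_l by nra. nra.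
Qed.

Lemma tanh_lim_minf : lim_minf tanh (-1).
Proof.
  apply lim_minf_iff_pinf_opp, lim_pinf_le_mult with (h := tanh) (l := 1) (K := 1).
  - intro x. rewrite tanh_opp, Rmult_1_l, <- Rabs_Ropp. right. f_equal. ring.
  - exact tanh_lim_pinf.
Qed.

(* Polynomials in cos (a t), sin (a t) and tanh (c x + b t); the derivative of
   tanh is written as the polynomial 1 - tanh^2. *)
Section TrigTanhPolynomials.
Variables a c b : R.

Inductive term : Type :=
  | Const (r : R) | Cos | Sin | Tanh | Add (u v : term) | Mul (u v : term).

Fixpoint eval (e : term) (x t : R) : R :=
  match e with
  | Const r => r
  | Cos => cos (a * t)
  | Sin => sin (a * t)
  | Tanh => tanh (c * x + b * t)
  | Add u v => eval u x t + eval v x t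
  | Mul u v => eval u x t * eval v x t
  end.

Definition sech_sq_term : term := Add (Const 1) (Mul (Const (-1)) (Mul Tanh Tanh)).

Fixpoint deriv_x (e : term) : term :=
  match e with
  | Const _ | Cos | Sin => Const 0
  | Tanh => Mul (Const c) sech_sq_term
  | Add u v => Add (deriv_x u) (deriv_x v)
  | Mul u v => Add (Mul (deriv_x u) v) (Mul u (deriv_x v))
  end.

Fixpoint deriv_t (e : term) : term :=
  match e with
  | Const _ => Const 0
  | Cos => Mul (Const (- a)) Sin
  | Sin => Mul (Const a) Cos
  | Tanh => Mul (Const b) sech_sq_term
  | Add u v => Add (deriv_t u) (deriv_t v)
  | Mul u v => Add (Mul (deriv_t u) v) (Mul u (deriv_t v))
  end.

Fixpoint bound (e : term) : R :=
  match e with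
  | Const r => Rabs r
  | Cos | Sin | Tanh => 1
  | Add u v => bound u + bound v
  | Mul u v => bound u * bound v
  end.

Lemma eval_bound e x t : Rabs (eval e x t) <= bound e.
Proof.
  induction e; simpl.
  - apply Rle_refl.
  - apply Rabs_le, COS_bound.
  - apply Rabs_le, SIN_bound.
  - apply Rabs_le. pose proof (tanh_bounds (c * x + b * t)). lra.
  - eapply Rle_trans; [apply Rabs_triang | lra].
  - rewrite Rabs_mult. apply Rmult_le_compat; auto using Rabs_pos.
Qed.

Lemma derivable_x_eval e x t :
  derivable_pt_lim (fun y => eval e y t) x (eval (deriv_x e) x t).
Proof.
  induction e; simpl; try apply derivable_pt_lim_const.
  - apply derivable_pt_lim_ext with (g := fun y => tanh (c * y + b * t))
      (l' := c * (1 - tanh (c * x + b * t) ^ 2)); [reflexivity | ring |].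
    apply (derivable_pt_lim_comp_affine tanh (fun z => 1 - tanh z ^ 2)), derivable_pt_lim_tanh.
  - apply (derivable_pt_lim_plus (fun y => eval e1 y t) (fun y => eval e2 y t)); auto.
  - apply (derivable_pt_lim_mult (fun y => eval e1 y t) (fun y => eval e2 y t)); auto.
Qed.

Lemma derivable_t_eval e x t :
  derivable_pt_lim (fun u => eval e x u) t (eval (deriv_t e) x t).
Proof.
  induction e; simpl; try apply derivable_pt_lim_const.
  - apply derivable_pt_lim_ext with (g := fun u => cos (a * u + 0))
      (l' := a * - sin (a * t + 0)); [intro; now rewrite Rplus_0_r | rewrite Rplus_0_r; ring |].
    apply (derivable_pt_lim_comp_affine cos (fun z => - sin z)), derivable_pt_lim_cos.
  - apply derivable_pt_lim_ext with (g := fun u => sin (a * u + 0))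
      (l' := a * cos (a * t + 0)); [intro; now rewrite Rplus_0_r | now rewrite Rplus_0_r |].
    apply (derivable_pt_lim_comp_affine sin cos), derivable_pt_lim_sin.
  - apply derivable_pt_lim_ext with (g := fun u => tanh (b * u + c * x))
      (l' := b * (1 - tanh (b * t + c * x) ^ 2)); [intro; now rewrite Rplus_comm | |].
    + rewrite (Rplus_comm (b * t)). ring.
    + apply (derivable_pt_lim_comp_affine tanh (fun z => 1 - tanh z ^ 2)), derivable_pt_lim_tanh.
  - apply (derivable_pt_lim_plus (fun u => eval e1 x u) (fun u => eval e2 x u)); auto.
  - apply (derivable_pt_lim_mult (fun u => eval e1 x u) (fun u => eval e2 x u)); auto.
Qed.

Lemma smooth2_eval e : smooth2 (eval e).
Proof.
  apply (smooth2_of_closed_class (fun f => exists e, f = eval e)); [| |now exists e].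
  - intros f [e' ->]. exists (bound e'). apply eval_bound.
  - intros f [e' ->]. exists (eval (deriv_x e')), (eval (deriv_t e')).
    repeat split; [apply derivable_x_eval | apply derivable_t_eval | eexists; reflexivity ..].
Qed.

End TrigTanhPolynomials.

Section Solution.
Variables q0 al th : R.

Let c := q0 * sin th.
Let b := / 2 * al * tan th.
Local Notation E := (eval al c b).
Local Notation Dx := (deriv_x c).
Local Notation Dt := (deriv_t al b).

Lemma xi_affine x t : xi q0 al th x t = c * x + b * t.
Proof. unfold xi, c, b. ring. Qed.

Definition q_re_term : term :=
  Mul (Const q0) (Add (Mul Cos (Const (cos th))) (Mul (Const (- sin th)) (Mul Sin Tanh))).
Definition q_im_term : term :=
  Mul (Const q0) (Add (Mul Sin (Const (cos th))) (Mul (Const (sin th)) (Mul Cos Tanh))).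
Definition s_term : term := Mul (Const (/ 2 * q0 * al * sin th * tan th)) sech_sq_term.
Definition pq_re_term : term :=
  Add (Const (q0 ^ 2 * cos th ^ 2)) (Mul (Const (q0 ^ 2 * sin th ^ 2)) (Mul Tanh Tanh)).

Lemma q_re_eval : q_re q0 al th = E q_re_term.
Proof.
  do 2 (apply functional_extensionality; intro). unfold q_re. rewrite xi_affine. simpl. ring.
Qed.

Lemma q_im_eval : q_im q0 al th = E q_im_term.
Proof.
  do 2 (apply functional_extensionality; intro). unfold q_im. rewrite xi_affine. simpl. ring.
Qed.

Lemma s_fun_eval : s_fun q0 al th = E s_term.
Proof.
  do 2 (apply functional_extensionality; intro).
  unfold s_fun. rewrite sech_sq, xi_affine. simpl. ring.
Qed.

Lemma q_opp_conj x t :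
  q_re q0 al th (- x) (- t) = q_re q0 al th x t /\ q_im q0 al th (- x) (- t) = - q_im q0 al th x t.
Proof.
  unfold q_re, q_im. replace (xi q0 al th (- x) (- t)) with (- xi q0 al th x t) by (unfold xi; ring).
  replace (al * - t) with (- (al * t)) by ring.
  rewrite tanh_opp, cos_neg, sin_neg. split; ring.
Qed.

Lemma pq_re_eval x t : pq_re q0 al th x t = E pq_re_term x t.
Proof.
  unfold pq_re. destruct (q_opp_conj x t) as [-> ->]. unfold q_re, q_im. rewrite xi_affine. simpl.
  pose proof (sin2_cos2 (al * t)) as Hpyth. unfold Rsqr in Hpyth.
  transitivity (q0 ^ 2 * (sin (al * t) * sin (al * t) + cos (al * t) * cos (al * t))
    * (cos th ^ 2 + sin th ^ 2 * tanh (c * x + b * t) ^ 2)); [ring | rewrite Hpyth; ring].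
Qed.

Lemma pq_im_eq_0 x t : pq_im q0 al th x t = 0.
Proof. unfold pq_im. destruct (q_opp_conj x t) as [-> ->]. ring. Qed.

Lemma smooth2_q_re : smooth2 (q_re q0 al th).
Proof. rewrite q_re_eval. apply smooth2_eval. Qed.

Lemma smooth2_q_im : smooth2 (q_im q0 al th).
Proof. rewrite q_im_eval. apply smooth2_eval. Qed.

Lemma smooth2_s_fun : smooth2 (s_fun q0 al th).
Proof. rewrite s_fun_eval. apply smooth2_eval. Qed.

Definition q_re_x : R -> R -> R := E (Dx q_re_term).
Definition q_im_x : R -> R -> R := E (Dx q_im_term).
Definition q_re_xt : R -> R -> R := E (Dt (Dx q_re_term)).
Definition q_im_xt : R -> R -> R := E (Dt (Dx q_im_term)).
Definition s_fun_x : R -> R -> R := E (Dx s_term).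
Definition pq_re_t : R -> R -> R := E (Dt pq_re_term).

Lemma derivable_x_q_re x t : derivable_pt_lim (fun y => q_re q0 al th y t) x (q_re_x x t).
Proof. rewrite q_re_eval. apply derivable_x_eval. Qed.

Lemma derivable_x_q_im x t : derivable_pt_lim (fun y => q_im q0 al th y t) x (q_im_x x t).
Proof. rewrite q_im_eval. apply derivable_x_eval. Qed.

Lemma derivable_t_q_re_x x t : derivable_pt_lim (fun u => q_re_x x u) t (q_re_xt x t).
Proof. apply derivable_t_eval. Qed.

Lemma derivable_t_q_im_x x t : derivable_pt_lim (fun u => q_im_x x u) t (q_im_xt x t).
Proof. apply derivable_t_eval. Qed.

Lemma derivable_x_s_fun x t : derivable_pt_lim (fun y => s_fun q0 al th y t) x (s_fun_x x t).
Proof. rewrite s_fun_eval. apply derivable_x_eval. Qed.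

Lemma derivable_t_pq_re x t : derivable_pt_lim (fun u => pq_re q0 al th x u) t (pq_re_t x t).
Proof.
  apply derivable_pt_lim_ext with (g := E pq_re_term x) (l' := pq_re_t x t);
    [apply pq_re_eval | reflexivity | apply derivable_t_eval].
Qed.

Lemma derivable_t_pq_im x t : derivable_pt_lim (fun u => pq_im q0 al th x u) t 0.
Proof.
  apply derivable_pt_lim_ext with (g := fun _ => 0) (l' := 0);
    [apply pq_im_eq_0 | reflexivity | apply derivable_pt_lim_const].
Qed.

Lemma s_fun_x_eq x t : s_fun_x x t = - pq_re_t x t.
Proof. unfold s_fun_x, pq_re_t, c, b. simpl. ring. Qed.

Lemma s_fun_opp x t : s_fun q0 al th (- x) (- t) = s_fun q0 al th x t.
Proof.
  unfold s_fun. rewrite !sech_sq. replace (xi q0 al th (- x) (- t)) with (- xi q0 al th x t)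
    by (unfold xi; ring). rewrite tanh_opp. ring.
Qed.

Hypothesis cos_th_neq0 : cos th <> 0.

Lemma q_re_xt_add_2sq x t : q_re_xt x t + 2 * s_fun q0 al th x t * q_re q0 al th x t = 0.
Proof.
  unfold q_re_xt, s_fun, q_re. rewrite sech_sq, xi_affine. simpl. unfold c, b, tan. field.
  exact cos_th_neq0.
Qed.

Lemma q_im_xt_add_2sq x t : q_im_xt x t + 2 * s_fun q0 al th x t * q_im q0 al th x t = 0.
Proof.
  unfold q_im_xt, s_fun, q_im. rewrite sech_sq, xi_affine. simpl. unfold c, b, tan. field.
  exact cos_th_neq0.
Qed.

Hypothesis q0_pos : 0 < q0.
Hypothesis sin_th_pos : 0 < sin th.

Lemma tanh_xi_lim_pinf t : lim_pinf (fun x => tanh (xi q0 al th x t)) 1.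
Proof.
  apply lim_pinf_comp_affine with (g := tanh) (k := c) (m := b * t).
  - unfold c. nra.
  - intro x. now rewrite xi_affine.
  - exact tanh_lim_pinf.
Qed.

Lemma tanh_xi_lim_minf t : lim_minf (fun x => tanh (xi q0 al th x t)) (-1).
Proof.
  apply lim_minf_comp_affine with (g := tanh) (k := c) (m := b * t).
  - unfold c. nra.
  - intro x. now rewrite xi_affine.
  - exact tanh_lim_minf.
Qed.

(* The boundary values are those of q with tanh ξ replaced by ±1; the error is
   linear in tanh ξ ∓ 1 with bounded coefficient. *)
Lemma q_re_lim_pinf t : lim_pinf (fun x => q_re q0 al th x t) (q0 * cos (al * t + th)).
Proof.
  apply lim_pinf_le_mult with (h := fun x => tanh (xi q0 al th x t)) (l := 1) (K := q0);
    [intro x | apply tanh_xi_lim_pinf].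
  replace (q_re q0 al th x t - q0 * cos (al * t + th)) with
    (q0 * (sin (al * t) * sin (- th)) * (tanh (xi q0 al th x t) - 1))
    by (unfold q_re; rewrite cos_plus, sin_neg; ring).
  apply Rabs_mult_le_l, Rabs_scaled_mult_le; [lra | apply Rabs_le, SIN_bound ..].
Qed.

Lemma q_im_lim_pinf t : lim_pinf (fun x => q_im q0 al th x t) (q0 * sin (al * t + th)).
Proof.
  apply lim_pinf_le_mult with (h := fun x => tanh (xi q0 al th x t)) (l := 1) (K := q0);
    [intro x | apply tanh_xi_lim_pinf].
  replace (q_im q0 al th x t - q0 * sin (al * t + th)) with
    (q0 * (cos (al * t) * sin th) * (tanh (xi q0 al th x t) - 1))
    by (unfold q_im; rewrite sin_plus; ring).
  apply Rabs_mult_le_l, Rabs_scaled_mult_le; [lra | apply Rabs_le, COS_bound | apply Rabs_le, SIN_bound].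
Qed.

Lemma q_re_lim_minf t : lim_minf (fun x => q_re q0 al th x t) (q0 * cos (al * t - th)).
Proof.
  apply lim_minf_le_mult with (h := fun x => tanh (xi q0 al th x t)) (l := -1) (K := q0);
    [intro x | apply tanh_xi_lim_minf].
  replace (q_re q0 al th x t - q0 * cos (al * t - th)) with
    (q0 * (sin (al * t) * sin (- th)) * (tanh (xi q0 al th x t) - -1))
    by (unfold q_re; rewrite cos_minus, sin_neg; ring).
  apply Rabs_mult_le_l, Rabs_scaled_mult_le; [lra | apply Rabs_le, SIN_bound ..].
Qed.

Lemma q_im_lim_minf t : lim_minf (fun x => q_im q0 al th x t) (q0 * sin (al * t - th)).
Proof.
  apply lim_minf_le_mult with (h := fun x => tanh (xi q0 al th x t)) (l := -1) (K := q0);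
    [intro x | apply tanh_xi_lim_minf].
  replace (q_im q0 al th x t - q0 * sin (al * t - th)) with
    (q0 * (cos (al * t) * sin th) * (tanh (xi q0 al th x t) - -1))
    by (unfold q_im; rewrite sin_minus; ring).
  apply Rabs_mult_le_l, Rabs_scaled_mult_le; [lra | apply Rabs_le, COS_bound | apply Rabs_le, SIN_bound].
Qed.

(* s = k (1 - tanh ξ) (1 + tanh ξ), and each factor 1 ± tanh ξ lies in [0, 2]. *)
Lemma s_fun_lim_pinf t : lim_pinf (fun x => s_fun q0 al th x t) 0.
Proof.
  set (k := / 2 * q0 * al * sin th * tan th).
  apply lim_pinf_le_mult with (h := fun x => tanh (xi q0 al th x t)) (l := 1) (K := 2 * Rabs k);
    [intro x | apply tanh_xi_lim_pinf].
  pose proof (tanh_bounds (xi q0 al th x t)).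
  replace (s_fun q0 al th x t - 0) with
    (- k * (1 + tanh (xi q0 al th x t)) * (tanh (xi q0 al th x t) - 1))
    by (unfold s_fun, k; rewrite sech_sq; ring).
  apply Rabs_mult_le_l. rewrite Rabs_mult, Rabs_Ropp, (Rabs_pos_eq (1 + _)) by lra.
  pose proof (Rabs_pos k). nra.
Qed.

Lemma s_fun_lim_minf t : lim_minf (fun x => s_fun q0 al th x t) 0.
Proof.
  set (k := / 2 * q0 * al * sin th * tan th).
  apply lim_minf_le_mult with (h := fun x => tanh (xi q0 al th x t)) (l := -1) (K := 2 * Rabs k);
    [intro x | apply tanh_xi_lim_minf].
  pose proof (tanh_bounds (xi q0 al th x t)).
  replace (s_fun q0 al th x t - 0) with
    (k * (1 - tanh (xi q0 al th x t)) * (tanh (xi q0 al th x t) - -1))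
    by (unfold s_fun, k; rewrite sech_sq; ring).
  apply Rabs_mult_le_l. rewrite Rabs_mult, (Rabs_pos_eq (1 - _)) by lra.
  pose proof (Rabs_pos k). nra.
Qed.

End Solution.

Theorem mainTheorem9 (q0 al th : R)
  (hq0 : 0 < q0) (hth : 0 < th < PI) (hth2 : th <> PI / 2) :
  smooth2 (q_re q0 al th) /\ smooth2 (q_im q0 al th) /\ smooth2 (s_fun q0 al th) /\
  (exists qx_re qx_im qxt_re qxt_im : R -> R -> R,
     (forall x t, derivable_pt_lim (fun y => q_re q0 al th y t) x (qx_re x t)) /\
     (forall x t, derivable_pt_lim (fun y => q_im q0 al th y t) x (qx_im x t)) /\
     (forall x t, derivable_pt_lim (fun u => qx_re x u) t (qxt_re x t)) /\
     (forall x t, derivable_pt_lim (fun u => qx_im x u) t (qxt_im x t)) /\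
     (forall x t, qxt_re x t + 2 * s_fun q0 al th x t * q_re q0 al th x t = 0) /\
     (forall x t, qxt_im x t + 2 * s_fun q0 al th x t * q_im q0 al th x t = 0)) /\
  (exists sx pt_re pt_im : R -> R -> R,
     (forall x t, derivable_pt_lim (fun y => s_fun q0 al th y t) x (sx x t)) /\
     (forall x t, derivable_pt_lim (fun u => pq_re q0 al th x u) t (pt_re x t)) /\
     (forall x t, derivable_pt_lim (fun u => pq_im q0 al th x u) t (pt_im x t)) /\
     (forall x t, sx x t = - pt_re x t) /\
     (forall x t, 0 = - pt_im x t)) /\
  (forall x t, s_fun q0 al th (- x) (- t) = s_fun q0 al th x t) /\
  (forall t, lim_pinf (fun x => s_fun q0 al th x t) 0 /\
             lim_minf (fun x => s_fun q0 al th x t) 0) /\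
  (forall t,
     lim_pinf (fun x => q_re q0 al th x t) (q0 * cos (al * t + th)) /\
     lim_pinf (fun x => q_im q0 al th x t) (q0 * sin (al * t + th)) /\
     lim_minf (fun x => q_re q0 al th x t) (q0 * cos (al * t - th)) /\
     lim_minf (fun x => q_im q0 al th x t) (q0 * sin (al * t - th))).
Proof.
  assert (Hsin : 0 < sin th) by (apply sin_gt_0; lra).
  pose proof (cos_neq_0_of_neq_PI2 th hth hth2) as Hcos.
  split; [apply smooth2_q_re|]. split; [apply smooth2_q_im|]. split; [apply smooth2_s_fun|].
  split.
  { exists (q_re_x q0 al th), (q_im_x q0 al th), (q_re_xt q0 al th), (q_im_xt q0 al th).
    repeat split; intros x t.
    - apply derivable_x_q_re.
    - apply derivable_x_q_im.
    - apply derivable_t_q_re_x.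
    - apply derivable_t_q_im_x.
    - now apply q_re_xt_add_2sq.
    - now apply q_im_xt_add_2sq. }
  split.
  { exists (s_fun_x q0 al th), (pq_re_t q0 al th), (fun _ _ => 0).
    repeat split; intros x t.
    - apply derivable_x_s_fun.
    - apply derivable_t_pq_re.
    - apply derivable_t_pq_im.
    - apply s_fun_x_eq.
    - ring. }
  split; [apply s_fun_opp|].
  split; intro t.
  - split; [apply s_fun_lim_pinf | apply s_fun_lim_minf]; assumption.
  - repeat split; [apply q_re_lim_pinf | apply q_im_lim_pinf | apply q_re_lim_minf | apply q_im_lim_minf];
      assumption.
Qed.
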